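(* Let $n\ge1$ and let $v=\mathrm{id}_{S^n}: S^n\to S^n$. Then the fundamental action on $[S^n\times S^n, S^n]^v$ is trivial.
   Context: $[S^n\times S^n,S^n]^v$ denotes the set of homotopy classes, relative the diagonal $D=\Delta(S^n)\subset S^n\times S^n$, of maps $f: S^n\times S^n\to S^n$ with $f\circ\Delta = v$. The fundamental action of $\pi_{n+1}(S^n)\cong[\Sigma_\ast D,S^n]^v$ (pointed self-homotopies of $v$) on this set is defined by extending such a self-homotopy to a homotopy starting at a given map $f$, using the homotopy extension property of $D\rightarrowtail S^n\times S^n$, and taking the end map. *)

From HB Require Import structures.
From mathcomp Require Import all_boot all_order all_algebra.
From mathcomp Require Import all_classical all_reals all_analysis.
Unset Printing Implicit Defensive.
Import Order.TTheory GRing.Theory Num.Theory.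
Import numFieldNormedType.Exports.
Local Open Scope classical_set_scope.
Local Open Scope ring_scope.

(* Spaces are realized as subsets of Euclidean spaces with the subspace
   topology; a continuous map A -> B is a function on the ambient types that is
   continuous within A and sends A into B. *)

Definition sphere (R : realType) (n : nat) : set 'rV[R]_(n.+1) :=
  [set x | \sum_(i < n.+1) x ord0 i ^+ 2 = 1].

Definition sbase (R : realType) (n : nat) : 'rV[R]_(n.+1) :=
  \row_(i < n.+1) (i == ord0)%:R.

Definition unitI (R : realType) : set R := [set t | 0 <= t <= 1].

Definition cmap {T U : topologicalType} (A : set T) (B : set U) (f : T -> U) :=
  {within A, continuous f} /\ (forall a, A a -> B (f a)).

Definition SxS (R : realType) (n : nat) : set ('rV[R]_(n.+1) * 'rV[R]_(n.+1)) :=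
  (sphere R n) `*` (sphere R n).

Definition relmap {R : realType} {n : nat}
    (f : 'rV[R]_(n.+1) * 'rV[R]_(n.+1) -> 'rV[R]_(n.+1)) :=
  cmap (SxS R n) (sphere R n) f /\ (forall x, sphere R n x -> f (x, x) = x).

Definition relhomotopic {R : realType} {n : nat}
    (f g : 'rV[R]_(n.+1) * 'rV[R]_(n.+1) -> 'rV[R]_(n.+1)) :=
  exists G : ('rV[R]_(n.+1) * 'rV[R]_(n.+1)) * R -> 'rV[R]_(n.+1),
    [/\ cmap ((SxS R n) `*` (unitI R)) (sphere R n) G,
        (forall p, SxS R n p -> G (p, 0) = f p),
        (forall p, SxS R n p -> G (p, 1) = g p) &
        (forall x t, sphere R n x -> unitI R t -> G ((x, x), t) = x)].

(* pointed self-homotopy of v = id_{S^n} (a representative of an element of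
   [Sigma_* D, S^n]^v ~ pi_{n+1}(S^n)), D identified with S^n via Delta *)
Definition pself_homotopy {R : realType} {n : nat}
    (H : 'rV[R]_(n.+1) * R -> 'rV[R]_(n.+1)) :=
  [/\ cmap ((sphere R n) `*` (unitI R)) (sphere R n) H,
      (forall x, sphere R n x -> H (x, 0) = x),
      (forall x, sphere R n x -> H (x, 1) = x) &
      (forall t, unitI R t -> H (sbase R n, t) = sbase R n)].

From HB Require Import structures.
From mathcomp Require Import all_boot all_order all_algebra.
From mathcomp Require Import all_classical all_reals all_analysis.
From mathcomp Require Import ring lra.
Import Order.TTheory GRing.Theory Num.Theory.
Import numFieldNormedType.Exports.
Local Open Scope classical_set_scope.
Local Open Scope ring_scope.

(* Put G(p, s) := H(f p, s).  Like F, G is a homotopy starting at f that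
   restricts to H on the diagonal, but G also ends at f.  By compactness,
   F(p, s) and G(p, s) are never antipodal for p close to the diagonal, so with
   a cutoff c that is 1 on the diagonal and 0 away from a neighbourhood of it,
   one goes from f = G(-, 1) back along G to G(-, c), across to F(-, c) along
   normalised segments, and forward along F to F(-, 1).  On the diagonal all
   three stages stay at the point itself. *)

Lemma continuous_subspace_comp {T U W : topologicalType} (A : set T) (B : set U)
    (h : T -> U) (g : U -> W) :
  {within A, continuous h} -> {within B, continuous g} ->
  (forall a, A a -> B (h a)) -> {within A, continuous (g \o h)}.
Proof.
move=> hc gc hAB; apply/subspace_continuousP => x Ax.
have hx := (subspace_continuousP A h).1 hc x Ax.
have gx := (subspace_continuousP B g).1 gc (h x) (hAB x Ax).
apply: cvg_comp gx => P /= BP; have := hx _ BP.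
rewrite !nbhs_filterE /within /=.
by apply: filterS => t Pt At; apply: Pt => //; exact: hAB.
Qed.

Lemma compact_gt0_lower_bound {R : realType} {T : topologicalType}
    (A : set T) (m : T -> R) :
  compact A -> {within A, continuous m} -> (forall x, A x -> 0 < m x) ->
  exists2 e : R, 0 < e & forall x, A x -> e <= m x.
Proof.
move=> cA cm m_gt0; have [A0|A0] := pselect (A !=set0); last first.
  by exists 1 => // x Ax; case: A0; exists x.
have [x0 /set_mem Ax0 m_min] := compact_EVT_min A0 cA cm.
by exists (m x0) => [|x Ax]; [exact: m_gt0 | exact/m_min/mem_set].
Qed.

Lemma unitIE {R : realType} : unitI R = `[0, 1]%classic.
Proof. by apply/seteqP; split => x /=; rewrite in_itv. Qed.

Lemma unitI_compact {R : realType} : compact (unitI R).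
Proof. by rewrite unitIE; exact: segment_compact. Qed.

Section Clamp.
Context {R : realType}.
Implicit Types z : R.

Definition clamp01 z := Num.min 1 (Num.max 0 z).

Lemma clamp01_unitI z : unitI R (clamp01 z).
Proof. by apply/andP; split; rewrite ?ge_min ?lexx // le_min ler01 le_max lexx. Qed.

Lemma clamp01_ge1 z : 1 <= z -> clamp01 z = 1.
Proof. by move=> z1; rewrite /clamp01 max_r ?(le_trans ler01) // min_l. Qed.

Lemma clamp01_le0 z : z <= 0 -> clamp01 z = 0.
Proof. by move=> z0; rewrite /clamp01 max_l // min_r ?ler01. Qed.

Lemma clamp01_gt0 z : 0 < clamp01 z -> 0 < z.
Proof. by move=> c0; rewrite ltNge; apply/negP => /clamp01_le0 c; rewrite c ltxx in c0. Qed.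

Lemma clamp01_lt1 z : clamp01 z < 1 -> z < 1.
Proof. by move=> c1; rewrite ltNge; apply/negP => /clamp01_ge1 c; rewrite c ltxx in c1. Qed.

Lemma clamp01_continuous : continuous clamp01.
Proof.
move=> z; apply: (@continuous_min _ _ (cst 1) (fun z => Num.max 0 z)).
  exact: cst_continuous.
by apply: (@continuous_max _ _ (cst 0) id); [exact: cst_continuous | exact: cvg_id].
Qed.

End Clamp.

Section SphereGeometry.
Context {R : realType} {n : nat}.
Implicit Types (u v w x y : 'rV[R]_n.+1) (l : R).

Definition dot u w : R := \sum_(i < n.+1) u ord0 i * w ord0 i.

Lemma dotC u w : dot u w = dot w u.
Proof. by apply: eq_bigr => i _; rewrite mulrC. Qed.

Lemma dotDl u v w : dot (u + v) w = dot u w + dot v w.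
Proof. by rewrite /dot -big_split; apply: eq_bigr => i _; rewrite mxE mulrDl. Qed.

Lemma dotZl (s : R) u w : dot (s *: u) w = s * dot u w.
Proof. by rewrite /dot mulr_sumr; apply: eq_bigr => i _; rewrite mxE mulrA. Qed.

Lemma dot_comb (a b : R) u w :
  dot (a *: u + b *: w) (a *: u + b *: w) =
  a ^+ 2 * dot u u + b ^+ 2 * dot w w + 2 * (a * b) * dot u w.
Proof.
rewrite dotDl !(dotC _ (a *: u + b *: w)) !dotDl !dotZl !(dotC _ (_ *: _)) !dotZl.
rewrite (dotC w u); ring.
Qed.

Lemma dot_self_ge0 u : 0 <= dot u u.
Proof. by apply: sumr_ge0 => i _; rewrite -expr2 sqr_ge0. Qed.

Lemma dot_self_eq0 u : dot u u = 0 -> u = 0.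
Proof.
move=> /eqP; rewrite psumr_eq0 => [/allP u0|i _]; last by rewrite -expr2 sqr_ge0.
apply/rowP => i; rewrite mxE.
by have := u0 i (mem_index_enum i); rewrite /= mulf_eq0 orbb => /eqP.
Qed.

Lemma sphereE x : sphere R n x <-> dot x x = 1.
Proof. by rewrite /sphere /dot /=; split => <-; apply: eq_bigr => i _; rewrite expr2. Qed.

Lemma sphere_dot_ge1 x y : sphere R n x -> sphere R n y -> 1 <= dot x y -> x = y.
Proof.
move=> /sphereE x1 /sphereE y1 xy1; apply/eqP; rewrite -subr_eq0; apply/eqP.
apply: dot_self_eq0; apply/eqP; rewrite eq_le dot_self_ge0 andbT.
have := dot_comb 1 (-1) x y; rewrite !scale1r scaleN1r => ->.
by rewrite x1 y1; lra.
Qed.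

Lemma continuous_dot {T : topologicalType} (u w : T -> 'rV[R]_n.+1) t :
  {for t, continuous u} -> {for t, continuous w} ->
  {for t, continuous (fun s => dot (u s) (w s))}.
Proof.
move=> uc wc; apply: (@cvg_big _ _ +%R 0 xpredT) => //; first exact: add_continuous.
move=> i _; have coord_i := @coord_continuous R 1 n.+1 ord0 i.
by apply: cvgM; [exact: cvg_comp _ _ uc (coord_i _) | exact: cvg_comp _ _ wc (coord_i _)].
Qed.

Definition normalize u := (Num.sqrt (dot u u))^-1 *: u.

Lemma normalize_sphere u : 0 < dot u u -> sphere R n (normalize u).
Proof.
move=> u_gt0; apply/sphereE; rewrite /normalize dotZl dotC dotZl mulrA -expr2.
by rewrite exprVn sqr_sqrtr ?ltW // mulVf ?gt_eqF.
Qed.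

Lemma normalize_id x : sphere R n x -> normalize x = x.
Proof. by move=> /sphereE x1; rewrite /normalize x1 sqrtr1 invr1 scale1r. Qed.

Lemma continuous_normalize {T : topologicalType} (u : T -> 'rV[R]_n.+1) t :
  0 < dot (u t) (u t) -> {for t, continuous u} ->
  {for t, continuous (fun s => normalize (u s))}.
Proof.
move=> u_gt0 uc; apply: continuousZ => //; apply: continuousV.
  by rewrite sqrtr_eq0 -ltNge.
apply: (continuous_cvg _ (@sqrt_continuous R _)).
exact: continuous_dot.
Qed.

Definition lerp l u w := (1 - l) *: u + l *: w.

Definition nlerp l u w := normalize (lerp l u w).

Lemma dot_lerp_gt0 l u w : sphere R n u -> sphere R n w -> unitI R l ->
  (0 < l < 1 -> 0 <= dot u w) -> 0 < dot (lerp l u w) (lerp l u w).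
Proof.
move=> /sphereE u1 /sphereE w1 /andP[l0 l1] uw.
rewrite /lerp dot_comb u1 w1 !mulr1.
have cross : 0 <= (1 - l) * l * dot u w.
  have [l_in|] := boolP (0 < l < 1).
    by rewrite !mulr_ge0 ?uw // ?subr_ge0.
  rewrite negb_and -!leNgt => /orP[l_le0|l_ge1].
    by rewrite (_ : l = 0) ?mulr0 ?mul0r //; lra.
  by rewrite (_ : l = 1) ?subrr ?mul0r //; lra.
nra.
Qed.

Lemma nlerp0 u w : sphere R n u -> nlerp 0 u w = u.
Proof. by move=> u1; rewrite /nlerp /lerp subr0 scale1r scale0r addr0 normalize_id. Qed.

Lemma nlerp1 u w : sphere R n w -> nlerp 1 u w = w.
Proof. by move=> w1; rewrite /nlerp /lerp subrr scale0r scale1r add0r normalize_id. Qed.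

Lemma nlerpxx l u : sphere R n u -> nlerp l u u = u.
Proof. by move=> u1; rewrite /nlerp /lerp -scalerDl subrK scale1r normalize_id. Qed.

Lemma continuous_nlerp {T : topologicalType} (l : T -> R) (u w : T -> 'rV[R]_n.+1) t :
  0 < dot (lerp (l t) (u t) (w t)) (lerp (l t) (u t) (w t)) ->
  {for t, continuous l} -> {for t, continuous u} -> {for t, continuous w} ->
  {for t, continuous (fun s => nlerp (l s) (u s) (w s))}.
Proof.
move=> lerp_gt0 lc uc wc.
apply: (@continuous_normalize _ (fun s => lerp (l s) (u s) (w s))) => //.
apply: continuousD; apply: continuousZ => //.
exact: continuousB (@cst_continuous _ _ _ _) lc.
Qed.

Lemma sphere_closed : closed (sphere R n).
Proof.
have -> : sphere R n = (fun x => dot x x) @^-1` [set 1].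
  by apply/seteqP; split => x /sphereE.
apply: preimage_closed; last exact: closed_eq.
by move=> x _; apply: continuous_dot.
Qed.

Lemma sphere_compact : compact (sphere R n).
Proof.
have box := @rV_compact R n.+1 (fun=> `[-1, 1]%classic) (fun=> @segment_compact R (-1) 1).
apply: (subclosed_compact sphere_closed box) => x /sphereE x1 i /=.
rewrite in_itv /= -ler_norml.
have : x ord0 i ^+ 2 <= 1.
  rewrite -x1 /dot (bigD1 i) //= -expr2 lerDl.
  by apply: sumr_ge0 => j _; rewrite -expr2 sqr_ge0.
by rewrite -real_normK ?num_real // expr_le1 ?normr_ge0.
Qed.

End SphereGeometry.

Arguments sphereE {R n x}.

Lemma continuous_reparam {T U V : topologicalType} (A : set T) (I : set V)
    (Phi : T * V -> U) (alpha : T * V -> V) :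
  {within A `*` I, continuous Phi} -> continuous alpha ->
  (forall q, (A `*` I) q -> I (alpha q)) ->
  {within A `*` I, continuous (fun q => Phi (q.1, alpha q))}.
Proof.
move=> Phi_c alpha_c alphaI.
apply: (@continuous_subspace_comp _ _ _ _ (A `*` I) (fun q => (q.1, alpha q)) Phi _ Phi_c).
  by apply: continuous_subspaceT => q; apply: cvg_pair; [exact: cvg_fst | exact: alpha_c].
by move=> q [Aq Iq]; split => //; exact: alphaI.
Qed.

Lemma cmap_comp_prod_id {T U V W : topologicalType} (A : set T) (B : set U)
    (I : set V) (C : set W) (f : T -> U) (Phi : U * V -> W) :
  cmap A B f -> cmap (B `*` I) C Phi -> cmap (A `*` I) C (fun q => Phi (f q.1, q.2)).
Proof.
move=> [f_cont fAB] [Phi_cont PhiBC].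
have fI q : (A `*` I) q -> (B `*` I) (f q.1, q.2) by move=> [Aq Iq]; split => //; exact: fAB.
split=> [|q /fI]; last exact: PhiBC.
apply: (continuous_subspace_comp _ _ (fun q => (f q.1, q.2)) _ _ Phi_cont fI).
have f1_cont : {within A `*` I, continuous (f \o fst)}.
  apply: (continuous_subspace_comp _ A fst f _ f_cont) => [|q []//].
  by apply: continuous_subspaceT => q; exact: cvg_fst.
have snd_cont : {within A `*` I, continuous (@snd T V)}.
  by apply: continuous_subspaceT => q; exact: cvg_snd.
by move=> q; exact: cvg_pair (f1_cont q) (snd_cont q).
Qed.

Section StraightenHomotopies.
Variables (R : realType) (n : nat) (T : topologicalType).
Variables (X : set T) (d : T -> R) (F G : T * R -> 'rV[R]_n.+1).
Hypothesis X_compact : compact X.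
Hypothesis d_continuous : continuous d.
Hypothesis F_cmap : cmap (X `*` unitI R) (sphere R n) F.
Hypothesis G_cmap : cmap (X `*` unitI R) (sphere R n) G.
Hypothesis FG0 : forall p, X p -> F (p, 0) = G (p, 0).
Hypothesis FG_zero_set :
  forall p s, X p -> d p <= 0 -> unitI R s -> F (p, s) = G (p, s).

Lemma dot_ge0_near_zero_set : exists2 e : R, 0 < e &
  forall p s, X p -> unitI R s -> d p < e -> 0 <= dot (F (p, s)) (G (p, s)).
Proof.
pose m q := Num.max (d q.1) (dot (F q) (G q)).
have m_continuous : {within X `*` unitI R, continuous m}.
  move=> q; apply: (@continuous_max R (subspace _) (fun q => d q.1)).
    apply: (continuous_subspaceT (f := fun q => d q.1)) => r.
    exact: continuous_comp (@cvg_fst _ _ _ _ _) (d_continuous _).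
  exact: continuous_dot (F_cmap.1 q) (G_cmap.1 q).
have m_gt0 q : (X `*` unitI R) q -> 0 < m q.
  move: q => [p s] [Xp Is]; rewrite /m lt_max /=.
  have [//|d_le0] := ltP 0 (d p).
  by rewrite FG_zero_set // (sphereE.1 (G_cmap.2 _ (conj Xp Is))) ltr01 orbT.
have XI_compact := compact_setX X_compact (@unitI_compact R).
have [e e_gt0 e_le_m] := compact_gt0_lower_bound _ _ XI_compact m_continuous m_gt0.
exists e => // p s Xp Is d_lt_e.
have := e_le_m (p, s) (conj Xp Is); rewrite /m le_max leNgt d_lt_e /=.
exact: le_trans (ltW e_gt0).
Qed.

Section Construction.
Variable e : R.
Hypothesis e_gt0 : 0 < e.
Hypothesis FG_dot_ge0 :
  forall p s, X p -> unitI R s -> d p < e -> 0 <= dot (F (p, s)) (G (p, s)).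

Definition cutoff p := clamp01 (1 - d p / e).

(* Time [0, 1/3] runs G backwards from 1 to the cutoff, [1/3, 2/3] crosses from
   G to F at the cutoff time, and [2/3, 1] runs F from the cutoff to 1. *)
Definition unwindG q := G (q.1, Num.max (cutoff q.1) (1 - 3 * q.2)).

Definition windF q := F (q.1, Num.max (cutoff q.1) (3 * q.2 - 2)).

Definition crossing (q : T * R) := clamp01 (3 * q.2 - 1).

Definition straighten q := nlerp (crossing q) (unwindG q) (windF q).

Lemma cutoff_zero_set p : d p <= 0 -> cutoff p = 1.
Proof.
move=> d_le0; apply: clamp01_ge1.
have : d p / e <= 0 by rewrite pmulr_lle0 ?invr_gt0.
lra.
Qed.

Lemma cutoff_gt0 p : 0 < cutoff p -> d p < e.
Proof. by move/clamp01_gt0; rewrite subr_gt0 ltr_pdivrMr // mul1r. Qed.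

Lemma cutoff_continuous : continuous cutoff.
Proof.
move=> p; apply: (@continuous_comp _ _ _ (fun p => 1 - d p / e) clamp01 _ _
  (clamp01_continuous _)).
apply: continuousB; first exact: cst_continuous.
by apply: continuousM; [exact: d_continuous | exact: cst_continuous].
Qed.

Lemma max_cutoff_unitI p s : s <= 1 -> unitI R (Num.max (cutoff p) s).
Proof.
move=> s_le1; have /andP[c_ge0 c_le1] := clamp01_unitI (1 - d p / e).
by apply/andP; rewrite le_max c_ge0 ge_max c_le1 s_le1.
Qed.

Lemma unwindG_sphere q : (X `*` unitI R) q -> sphere R n (unwindG q).
Proof.
move=> [Xp /andP[s_ge0 _]]; apply: G_cmap.2; split => //.
by apply: max_cutoff_unitI; lra.
Qed.

Lemma windF_sphere q : (X `*` unitI R) q -> sphere R n (windF q).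
Proof.
move=> [Xp /andP[_ s_le1]]; apply: F_cmap.2; split => //.
by apply: max_cutoff_unitI; lra.
Qed.

Lemma crossing_interior q : 0 < crossing q < 1 ->
  unwindG q = G (q.1, cutoff q.1) /\ windF q = F (q.1, cutoff q.1).
Proof.
move=> /andP[/clamp01_gt0 t_gt0 /clamp01_lt1 t_lt1].
have /andP[c_ge0 _] := clamp01_unitI (1 - d q.1 / e).
by rewrite /unwindG /windF !max_l //; apply: le_trans c_ge0; lra.
Qed.

Lemma dot_straighten_gt0 q : (X `*` unitI R) q ->
  0 < dot (lerp (crossing q) (unwindG q) (windF q))
          (lerp (crossing q) (unwindG q) (windF q)).
Proof.
move=> XIq; have [Xp _] := XIq.
apply: dot_lerp_gt0; [exact: unwindG_sphere | exact: windF_sphere |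
  exact: clamp01_unitI |].
move=> /crossing_interior[-> ->]; rewrite dotC.
have /andP[c_ge0 c_le1] := clamp01_unitI (1 - d q.1 / e).
have [c0|c_neq0] := eqVneq (cutoff q.1) 0.
  have I0 : unitI R 0 by apply/andP; rewrite lexx ler01.
  by rewrite c0 FG0 // (sphereE.1 (G_cmap.2 (q.1, 0) (conj Xp I0))) ler01.
apply: FG_dot_ge0 => //; first exact/andP.
by apply: cutoff_gt0; rewrite lt_def c_neq0.
Qed.

Lemma straighten_sphere q : (X `*` unitI R) q -> sphere R n (straighten q).
Proof. by move=> XIq; apply: normalize_sphere; exact: dot_straighten_gt0. Qed.

Lemma straighten_continuous : {within X `*` unitI R, continuous straighten}.
Proof.
have cutoff1 : continuous (fun q : T * R => cutoff q.1).
  by move=> q; exact: continuous_comp (@cvg_fst _ _ _ _ _) (cutoff_continuous _).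
have time3 : continuous (fun q : T * R => 3 * q.2).
  by move=> q; apply: cvgM; [exact: cvg_cst | exact: cvg_snd].
rewrite continuous_subspace_in => q /set_mem XIq.
apply: (@continuous_nlerp _ _ (subspace _) crossing unwindG windF).
- exact: dot_straighten_gt0.
- apply: (continuous_subspaceT (f := crossing)) => r.
  apply: (@continuous_comp _ _ _ (fun q : T * R => 3 * q.2 - 1) clamp01 _ _
    (clamp01_continuous _)).
  by apply: cvgB; [exact: time3 _ | exact: cvg_cst].
- apply: (continuous_reparam _ _ _ (fun q : T * R => Num.max (cutoff q.1) (1 - 3 * q.2))
    G_cmap.1) => [r|r [_ /andP[s_ge0 _]]]; last by apply: max_cutoff_unitI; lra.
  apply: (@continuous_max _ _ (fun q : T * R => cutoff q.1)); first exact: cutoff1.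
  by apply: cvgB; [exact: cvg_cst | exact: time3 _].
- apply: (continuous_reparam _ _ _ (fun q : T * R => Num.max (cutoff q.1) (3 * q.2 - 2))
    F_cmap.1) => [r|r [_ /andP[_ s_le1]]]; last by apply: max_cutoff_unitI; lra.
  apply: (@continuous_max _ _ (fun q : T * R => cutoff q.1)); first exact: cutoff1.
  by apply: cvgB; [exact: time3 _ | exact: cvg_cst].
Qed.

Lemma straighten0 p : X p -> straighten (p, 0) = G (p, 1).
Proof.
move=> Xp; have /andP[_ c_le1] := clamp01_unitI (1 - d p / e).
rewrite /straighten /crossing /unwindG /= mulr0 sub0r clamp01_le0 ?lerN10 //.
rewrite subr0 max_r // nlerp0 //; apply: G_cmap.2; split => //.
by apply/andP; rewrite ler01 lexx.
Qed.

Lemma straighten1 p : X p -> straighten (p, 1) = F (p, 1).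
Proof.
move=> Xp; have /andP[_ c_le1] := clamp01_unitI (1 - d p / e).
rewrite /straighten /crossing /windF /= mulr1 clamp01_ge1; last lra.
rewrite (_ : 3 - 2 = 1 :> R); last lra.
rewrite max_r // nlerp1 //; apply: F_cmap.2; split => //.
by apply/andP; rewrite ler01 lexx.
Qed.

Lemma straighten_zero_set p t : X p -> d p <= 0 -> unitI R t ->
  straighten (p, t) = F (p, 1).
Proof.
move=> Xp d_le0 /andP[t_ge0 t_le1].
have I1 : unitI R 1 by apply/andP; rewrite ler01 lexx.
have unwind_le1 : 1 - 3 * t <= 1 by lra.
have wind_le1 : 3 * t - 2 <= 1 by lra.
rewrite /straighten /unwindG /windF /= cutoff_zero_set // (max_l unwind_le1).
by rewrite (max_l wind_le1) -FG_zero_set // nlerpxx //; apply: F_cmap.2.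
Qed.

End Construction.

Lemma end_maps_homotopic_rel : exists K : T * R -> 'rV[R]_n.+1,
  [/\ cmap (X `*` unitI R) (sphere R n) K,
      forall p, X p -> K (p, 0) = G (p, 1),
      forall p, X p -> K (p, 1) = F (p, 1) &
      forall p t, X p -> d p <= 0 -> unitI R t -> K (p, t) = F (p, 1)].
Proof.
have [e e_gt0 FG_dot_ge0] := dot_ge0_near_zero_set.
exists (straighten e); split.
- by split; [exact: straighten_continuous | exact: straighten_sphere].
- exact: straighten0.
- exact: straighten1.
- exact: straighten_zero_set.
Qed.
End StraightenHomotopies.

Theorem corollary4p5 (R : realType) (n : nat) (hn : (1 <= n)%N)
  (f : 'rV[R]_(n.+1) * 'rV[R]_(n.+1) -> 'rV[R]_(n.+1))
  (H : 'rV[R]_(n.+1) * R -> 'rV[R]_(n.+1))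
  (F : ('rV[R]_(n.+1) * 'rV[R]_(n.+1)) * R -> 'rV[R]_(n.+1)) :
  relmap f ->
  pself_homotopy H ->
  cmap ((SxS R n) `*` (unitI R)) (sphere R n) F ->
  (forall p, SxS R n p -> F (p, 0) = f p) ->
  (forall x t, sphere R n x -> unitI R t -> F ((x, x), t) = H (x, t)) ->
  relhomotopic f (fun p => F (p, 1)).
Proof.
move=> [f_cmap f_diag] [H_cmap H0 H1 _] F_cmap F0 F_diag.
pose G q := H (f q.1, q.2).
have G_cmap : cmap (SxS R n `*` unitI R) (sphere R n) G :=
  cmap_comp_prod_id _ _ _ _ _ _ f_cmap H_cmap.
have d_continuous : continuous (fun p : 'rV[R]_n.+1 * 'rV[R]_n.+1 => 1 - dot p.1 p.2).
  move=> p; apply: cvgB; first exact: cvg_cst.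
  exact: continuous_dot (@cvg_fst _ _ _ _ _) (@cvg_snd _ _ _ _ _).
have FG0 p : SxS R n p -> F (p, 0) = G (p, 0).
  by move=> Sp; rewrite F0 // /G H0 //; exact: f_cmap.2.
have FG_diag p s : SxS R n p -> 1 - dot p.1 p.2 <= 0 -> unitI R s -> F (p, s) = G (p, s).
  move: p => [x y] [Sx Sy] /= dxy Is.
  have <- : x = y by apply: sphere_dot_ge1 => //; lra.
  by rewrite F_diag // /G /= f_diag.
have SxS_compact := compact_setX (@sphere_compact R n) (@sphere_compact R n).
have [K [K_cmap K0 K1 K_diag]] :=
  @end_maps_homotopic_rel _ _ _ _ _ _ _ SxS_compact d_continuous F_cmap G_cmap FG0 FG_diag.
exists K; split => // [p Sp|x t Sx It].
  by rewrite K0 // /G H1 //; exact: f_cmap.2.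
have I1 : unitI R 1 by apply/andP; rewrite ler01 lexx.
have d_diag : 1 - dot x x <= 0 by rewrite (sphereE.1 Sx) subrr.
by rewrite K_diag //= F_diag // H1.
Qed.
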